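(* Let $\rho\in(0,1)$, $\phi:(0,1)\to\mathbb{R}_+$, $\alpha\geqslant0$, and let $\{\psi_t\}_{t\geqslant0}$ be a preconditioned first-order method satisfying $(\rho,\phi(\rho),\alpha)$-linear convergence. Then for any $x_0\in\mathbb{R}^d$, $m\geqslant1$ and $S\in\mathbb{R}^{m\times n}$ such that $\|C_S-I_d\|_2\leqslant\sqrt\rho$, the iterates $x_{t+1}=\psi_t(x_0,\dots,x_t;H_S)$ satisfy, for all $t\geqslant0$, $$\widetilde\delta_t\leqslant c(\alpha,\rho)\,\phi(\rho)^t\,\widetilde\delta_0,$$ where $\widetilde\delta_t=\frac12\nabla f(x_t)^\top H_S^{-1}\nabla f(x_t)$ and $c(\alpha,\rho)=\frac{1+\sqrt\rho}{1-\sqrt\rho}\,\alpha$.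
   Context: Let $A\in\mathbb{R}^{n\times d}$ with $n\geqslant d$, $b\in\mathbb{R}^d$, $\Lambda\in\mathbb{R}^{d\times d}$ diagonal with $\Lambda\succeq I_d$, and $\nu>0$. Set $H=A^\top A+\nu^2\Lambda$, $f(x)=\frac12 x^\top Hx-b^\top x$, $x^*=H^{-1}b$. For $S\in\mathbb{R}^{m\times n}$ set $H_S=A^\top S^\top SA+\nu^2\Lambda$ and $C_S=H^{-1/2}H_SH^{-1/2}$. For an iterate $x_t$, $\delta_t=\frac12\|x_t-x^*\|_H^2$ with $\|z\|_H^2=z^\top Hz$. A preconditioned first-order method is a sequence of functions $\{\psi_t\}_{t\geqslant0}$ such that for any preconditioner $P\succ0$ and any $x_0\in\mathbb{R}^d$ the iterates $x_{t+1}=\psi_t(x_0,\dots,x_t;P)$ satisfy $x_{t+1}\in x_0+P^{-1}\,\mathrm{span}\{\nabla f(x_0),\dots,\nabla f(x_t)\}$ for all $t\geqslant0$. It satisfies $(\rho,\phi(\rho),\alpha)$-linear convergence if for every $x_0\in\mathbb{R}^d$, $m\geqslant1$ and $S\in\mathbb{R}^{m\times n}$ with $\|C_S-I_d\|_2\leqslant\max\{\sqrt\rho,\rho\}$, the iterates $x_{t+1}=\psi_t(x_0,\dots,x_t;H_S)$ satisfy $\delta_t\leqslant\alpha\,\phi(\rho)^t\,\delta_0$ for all $t\geqslant0$. *)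

From HB Require Import structures.
From mathcomp Require Import all_boot all_order all_algebra.
From mathcomp Require Import classical_sets boolp reals.
Set Implicit Arguments. Unset Strict Implicit. Unset Printing Implicit Defensive.
Import Order.TTheory GRing.Theory Num.Theory.
Local Open Scope ring_scope.
Local Open Scope classical_set_scope.

Section Defs.
Variable R : realType.

Definition qform (k : nat) (M : 'M[R]_k) (x y : 'cV[R]_k) : R := (x^T *m M *m y) 0 0.

Definition vnorm (k : nat) (x : 'cV[R]_k) : R := Num.sqrt ((x^T *m x) 0 0).

Definition opnorm2 (k : nat) (M : 'M[R]_k) : R :=
  sup [set vnorm (M *m x) / vnorm x | x in [set x : 'cV[R]_k | x != 0]].

Definition posdef (k : nat) (M : 'M[R]_k) : Prop :=
  M^T = M /\ forall x : 'cV[R]_k, x != 0 -> 0 < qform M x x.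

Definition invsqrtm (k : nat) (M : 'M[R]_k) : 'M[R]_k :=
  xget 0 [set Q : 'M[R]_k | posdef Q /\ Q *m Q = invmx M].

Variables (n d : nat) (A : 'M[R]_(n, d)) (b : 'cV[R]_d) (Lam : 'M[R]_d) (nu : R).

Definition Hmat : 'M[R]_d := A^T *m A + (nu ^+ 2) *: Lam.
Definition fobj (x : 'cV[R]_d) : R := 2^-1 * qform Hmat x x - (b^T *m x) 0 0.
Definition gradf (x : 'cV[R]_d) : 'cV[R]_d := Hmat *m x - b.
Definition xstar : 'cV[R]_d := invmx Hmat *m b.
Definition HS (m : nat) (S : 'M[R]_(m, n)) : 'M[R]_d :=
  A^T *m S^T *m S *m A + (nu ^+ 2) *: Lam.
Definition CS (m : nat) (S : 'M[R]_(m, n)) : 'M[R]_d :=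
  invsqrtm Hmat *m HS S *m invsqrtm Hmat.
Definition delta (x : 'cV[R]_d) : R := 2^-1 * qform Hmat (x - xstar) (x - xstar).
Definition delta_tilde (m : nat) (S : 'M[R]_(m, n)) (x : 'cV[R]_d) : R :=
  2^-1 * qform (invmx (HS S)) (gradf x) (gradf x).

(* A method is psi : nat -> seq of past iterates [:: x_0; ...; x_t] -> P -> x_{t+1} *)
Definition method := nat -> seq 'cV[R]_d -> 'M[R]_d -> 'cV[R]_d.

Fixpoint history (psi : method) (x0 : 'cV[R]_d) (P : 'M[R]_d) (t : nat) : seq 'cV[R]_d :=
  match t with
  | 0 => [:: x0]
  | t'.+1 => let h := history psi x0 P t' in rcons h (psi t' h P)
  end.

Definition iterate (psi : method) (x0 : 'cV[R]_d) (P : 'M[R]_d) (t : nat) : 'cV[R]_d :=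
  last x0 (history psi x0 P t).

Definition precond_first_order (psi : method) : Prop :=
  forall (P : 'M[R]_d) (x0 : 'cV[R]_d), posdef P -> forall t : nat,
    exists c : 'I_t.+1 -> R,
      iterate psi x0 P t.+1 =
      x0 + invmx P *m (\sum_(i < t.+1) c i *: gradf (iterate psi x0 P i)).

Definition linear_convergence (psi : method) (rho phirho alpha : R) : Prop :=
  forall (x0 : 'cV[R]_d) (m : nat) (S : 'M[R]_(m, n)),
    (1 <= m)%N ->
    opnorm2 (CS S - 1%:M) <= Num.max (Num.sqrt rho) rho ->
    forall t : nat,
      delta (iterate psi x0 (HS S) t) <= alpha * phirho ^+ t * delta x0.

End Defs.

From Pilot Require Import Defs.
From mathcomp Require Import all_boot all_order all_algebra.
From mathcomp Require Import classical_sets boolp reals ring lra.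
Import Order.TTheory GRing.Theory Num.Theory.
Set Implicit Arguments. Unset Strict Implicit. Unset Printing Implicit Defensive.
Local Open Scope ring_scope.
Local Open Scope classical_set_scope.

(* Write s = sqrt rho. Since x - x^* = H^-1 grad f(x), delta = 1/2 grad f^T H^-1 grad f.
   The bound |C_S - I| <= s makes |w^T H_S w - w^T H w| <= s w^T H w, i.e.
   (1 - s) H <= H_S <= (1 + s) H in the Loewner order, which inverts to
   H^-1 <= (1 + s) H_S^-1 and H_S^-1 <= (1 - s)^-1 H^-1. Hence
   tilde delta_t <= delta_t / (1 - s) and delta_0 <= (1 + s) tilde delta_0, and
   the assumed linear convergence (applicable as s <= max(s, rho)) links the two.
   The Loewner order is inverted without diagonalising: if A <= c B, put
   u = A^-1 g and v = B^-1 g; then v^T A u = v^T B v = g^T B^-1 g, and AM-GM for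
   the form A gives 2 v^T B v <= v^T A v / c + c u^T A u <= v^T B v + c g^T A^-1 g. *)

Section QuadraticForms.
Variables (R : realType) (k : nat).
Implicit Types (s t : R) (M : 'M[R]_k) (u v x y z : 'cV[R]_k).

Lemma qformC M x y : M^T = M -> qform M x y = qform M y x.
Proof.
move=> sym_M; rewrite /qform; transitivity ((x^T *m M *m y)^T 0 0); first by rewrite [RHS]mxE.
by rewrite !trmx_mul trmxK sym_M mulmxA.
Qed.

Lemma qform_scale_sub M t u v :
  qform M (t *: u - v) (t *: u - v) =
  t ^+ 2 * qform M u u - t * qform M u v - t * qform M v u + qform M v v.
Proof.
rewrite /qform.
have -> : (t *: u - v)^T = t *: u^T - v^T by apply/matrixP => i j; rewrite !mxE.
rewrite !(mulmxBl, mulmxBr) -!scalemxAl -!scalemxAr !(mxE, scalerA).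
ring.
Qed.

Lemma qform_AMGM M t u v :
  M^T = M -> (forall x, 0 <= qform M x x) -> 0 < t ->
  2 * qform M u v <= t * qform M u u + qform M v v / t.
Proof.
move=> sym_M psd_M t_gt0.
have := psd_M (t *: u - v); rewrite qform_scale_sub (qformC v u sym_M) => psd_tuv.
rewrite -(ler_pM2r t_gt0) [leRHS]mulrDl divfK ?gt_eqF //.
nra.
Qed.

Definition sqnorm x : R := (x^T *m x) 0 0.

Lemma sqnormE x : sqnorm x = \sum_i x i 0 ^+ 2.
Proof. by rewrite /sqnorm mxE; apply: eq_bigr => i _; rewrite mxE expr2. Qed.

Lemma sqnorm_ge0 x : 0 <= sqnorm x.
Proof. by rewrite sqnormE sumr_ge0 // => i _; rewrite sqr_ge0. Qed.

Lemma coord_sqr_le_sqnorm x i : x i 0 ^+ 2 <= sqnorm x.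
Proof. by rewrite sqnormE (bigD1 i) //= lerDl sumr_ge0 // => j _; rewrite sqr_ge0. Qed.

Lemma sqnorm_gt0 x : x != 0 -> 0 < sqnorm x.
Proof.
apply: contraNT; rewrite -leNgt => x_le0; apply/eqP/matrixP => i j.
rewrite (ord1 j) !mxE; apply/eqP; rewrite -sqrf_eq0 eq_le sqr_ge0 andbT.
exact: le_trans (coord_sqr_le_sqnorm x i) x_le0.
Qed.

Lemma sqnormN x : sqnorm (- x) = sqnorm x.
Proof.
rewrite /sqnorm; have -> : (- x)^T = - x^T by apply/matrixP => i j; rewrite !mxE.
by rewrite mulNmx mulmxN opprK.
Qed.

Lemma sqr_vnorm x : vnorm x ^+ 2 = sqnorm x.
Proof. exact/sqr_sqrtr/sqnorm_ge0. Qed.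

Lemma coord_le_vnorm x i : `|x i 0| <= vnorm x.
Proof. by rewrite -sqrtr_sqr ler_wsqrtr // coord_sqr_le_sqnorm. Qed.

Lemma sqnorm_mulmx_le M x :
  sqnorm (M *m x) <= (\sum_i (\sum_j `|M i j|) ^+ 2) * sqnorm x.
Proof.
rewrite [leLHS]sqnormE mulr_suml; apply: ler_sum => i _.
have row_le : `|(M *m x) i 0| <= (\sum_j `|M i j|) * vnorm x.
  rewrite mxE mulr_suml; apply: le_trans (ler_norm_sum _ _ _) _.
  by apply: ler_sum => j _; rewrite normrM ler_wpM2l // coord_le_vnorm.
rewrite -sqr_vnorm -exprMn -real_normK ?num_real //.
by rewrite lerXn2r ?nnegrE ?mulr_ge0 ?sumr_ge0 ?sqrtr_ge0.
Qed.

Lemma opnorm2_sqnorm_le M s x :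
  0 <= s -> opnorm2 M <= s -> sqnorm (M *m x) <= s ^+ 2 * sqnorm x.
Proof.
move=> s_ge0 opM_le; have [->|x_neq0] := eqVneq x 0.
  by rewrite mulmx0 /sqnorm mulmx0 mxE mulr0.
have vx_gt0 : 0 < vnorm x by rewrite sqrtr_gt0 sqnorm_gt0.
set E := [set vnorm (M *m y) / vnorm y | y in [set y | y != 0]].
set K := \sum_i (\sum_j `|M i j|) ^+ 2.
have K_ge0 : 0 <= K by rewrite sumr_ge0 // => i _; rewrite sqr_ge0.
have supE : has_sup E.
  split; first by exists (vnorm (M *m x) / vnorm x); exists x.
  exists (Num.sqrt K) => _ [y /= y_neq0 <-].
  rewrite ler_pdivrMr ?sqrtr_gt0 ?sqnorm_gt0 // -sqrtrM //.
  by rewrite ler_wsqrtr // sqnorm_mulmx_le.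
have : vnorm (M *m x) / vnorm x <= s.
  by apply: le_trans opM_le; apply: sup_upper_bound => //; exists x.
rewrite ler_pdivrMr // -!sqr_vnorm -exprMn.
by apply: lerXn2r; rewrite ?nnegrE ?mulr_ge0 ?sqrtr_ge0.
Qed.

Lemma norm_dot_le_sqnorm s y z : 0 < s -> sqnorm z <= s ^+ 2 * sqnorm y ->
  `|(y^T *m z) 0 0| <= s * sqnorm y.
Proof.
move=> s_gt0 z_le.
have AMGM1 v : 2 * (y^T *m v) 0 0 <= s * sqnorm y + sqnorm v / s.
  have qform1 x x' : qform 1%:M x x' = (x^T *m x') 0 0 by rewrite /qform mulmx1.
  have psd1 x : 0 <= qform 1%:M x x by rewrite qform1 sqnorm_ge0.
  by have := qform_AMGM y v (trmx1 _ _) psd1 s_gt0; rewrite !qform1.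
have z_div : sqnorm z / s <= s * sqnorm y.
  by rewrite ler_pdivrMr // mulrAC -expr2.
have := AMGM1 (- z); rewrite sqnormN mulmxN mxE.
have := AMGM1 z; rewrite ler_norml.
lra.
Qed.

Lemma cV_eq0_of_opnorm2_opp1 s x :
  0 <= s -> s < 1 -> opnorm2 (- 1%:M : 'M[R]_k) <= s -> x = 0.
Proof.
move=> s_ge0 s_lt1 op_le; apply/eqP; apply: contraT => /sqnorm_gt0 x_gt0.
have s2_lt1 : s ^+ 2 < 1 by rewrite expr2; nra.
have := opnorm2_sqnorm_le x s_ge0 op_le; rewrite mulNmx mul1mx sqnormN.
nra.
Qed.

Lemma sqnorm_le_qform_diag L x :
  is_diag_mx L -> (forall i, 1 <= L i i) -> sqnorm x <= qform L x x.
Proof.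
move=> /is_diag_mxP L_diag L_ge1; rewrite sqnormE /qform mxE; apply: ler_sum => j _.
rewrite mxE (bigD1 j) //= big1 ?addr0 => [|i i_neq_j]; last first.
  by rewrite L_diag ?mulr0 // eq_sym.
by rewrite mxE mulrAC -expr2 ler_peMr ?sqr_ge0.
Qed.

End QuadraticForms.

Section PositiveDefinite.
Variables (R : realType) (k : nat).
Implicit Types (s c : R) (M L : 'M[R]_k) (v x w g : 'cV[R]_k).

Lemma posdef_qform_ge0 M x : posdef M -> 0 <= qform M x x.
Proof.
move=> [_ pd_M]; have [->|/pd_M/ltW //] := eqVneq x 0.
by rewrite /qform mulmx0 mxE.
Qed.

Lemma posdef_unitmx M : posdef M -> M \in unitmx.
Proof.
move=> [sym_M pd_M]; rewrite -row_free_unit; apply: inj_row_free => v vM0.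
apply/eqP; rewrite -trmx_eq0; apply: contraT => vT_neq0.
have := pd_M _ vT_neq0; rewrite /qform trmxK -mulmxA.
by rewrite -[in M *m _]sym_M -trmx_mul vM0 trmx0 mulmx0 mxE ltxx.
Qed.

Lemma posdef_regularized_gram p (B : 'M[R]_(p, k)) L (nu : R) :
  is_diag_mx L -> (forall i, 1 <= L i i) -> 0 < nu ->
  posdef (B^T *m B + nu ^+ 2 *: L).
Proof.
move=> L_diag L_ge1 nu_gt0; split.
  have L_sym : L^T = L.
    apply/matrixP => i j; rewrite mxE; have [-> //|i_neq_j] := eqVneq i j.
    by move/is_diag_mxP: L_diag => L_diag; rewrite !L_diag // eq_sym.
  by rewrite linearD /= linearZ /= trmx_mul trmxK L_sym.
move=> x x_neq0.
have -> : qform (B^T *m B + nu ^+ 2 *: L) x x = sqnorm (B *m x) + nu ^+ 2 * qform L x x.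
  rewrite /qform /sqnorm trmx_mul mulmxDr mulmxDl -scalemxAr -scalemxAl !mulmxA.
  by rewrite !mxE.
have := sqnorm_le_qform_diag x L_diag L_ge1.
have := sqnorm_ge0 (B *m x); have := sqnorm_gt0 x_neq0.
have : 0 < nu ^+ 2 by rewrite exprn_gt0.
nra.
Qed.

Lemma qform_invmx M g : posdef M ->
  qform M (invmx M *m g) (invmx M *m g) = qform (invmx M) g g.
Proof.
move=> pd_M; have [sym_M _] := pd_M.
rewrite /qform trmx_mul trmx_inv sym_M -!mulmxA (mulmxA M) mulmxV ?mul1mx //.
exact: posdef_unitmx.
Qed.

Lemma qform_invmx_le M1 M2 c g : posdef M1 -> posdef M2 -> 0 < c ->
  (forall v, qform M1 v v <= c * qform M2 v v) ->
  qform (invmx M2) g g <= c * qform (invmx M1) g g.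
Proof.
move=> pd_M1 pd_M2 c_gt0 M1_le_M2.
have [[sym_M1 _] unit_M1] := (pd_M1, posdef_unitmx pd_M1).
have unit_M2 := posdef_unitmx pd_M2.
set u := invmx M1 *m g; set v := invmx M2 *m g.
have cross : qform M1 v u = qform M2 v v.
  by rewrite /qform /u /v -!mulmxA mulKVmx // mulKVmx.
have cV_gt0 : 0 < c^-1 by rewrite invr_gt0.
have := qform_AMGM v u sym_M1 (fun x => posdef_qform_ge0 x pd_M1) cV_gt0.
rewrite cross invrK -(qform_invmx _ pd_M1) -(qform_invmx _ pd_M2) -/u -/v.
have : c^-1 * qform M1 v v <= qform M2 v v.
  by rewrite ler_pdivrMl // M1_le_M2.
lra.
Qed.

Lemma qform_dev_le_of_opnorm2 H G Q s w :
  posdef H -> Q^T = Q -> Q *m Q = invmx H -> 0 < s ->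
  opnorm2 (Q *m G *m Q - 1%:M) <= s ->
  `|qform G w w - qform H w w| <= s * qform H w w.
Proof.
move=> pd_H sym_Q QQ s_gt0 opC_le.
have unit_H := posdef_unitmx pd_H.
set y := Q *m (H *m w).
have Qy : Q *m y = w by rewrite /y mulmxA QQ mulKmx.
have yTQ : y^T *m Q = w^T by rewrite -[Q in LHS]sym_Q -trmx_mul Qy.
have y_sqnorm : sqnorm y = qform H w w.
  by rewrite /sqnorm {2}/y !mulmxA yTQ.
have yCy : (y^T *m ((Q *m G *m Q - 1%:M) *m y)) 0 0 = qform G w w - qform H w w.
  rewrite mulmxBl mul1mx mulmxBr [LHS]mxE [X in _ + X]mxE -/(sqnorm y) y_sqnorm.
  by congr (_ - _); rewrite /qform !mulmxA yTQ -!mulmxA Qy.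
rewrite -yCy -y_sqnorm norm_dot_le_sqnorm //.
exact: opnorm2_sqnorm_le (ltW s_gt0) opC_le.
Qed.

Lemma qform_invmx_sandwich H G s g : posdef H -> posdef G -> 0 <= s -> s < 1 ->
  (forall w, `|qform G w w - qform H w w| <= s * qform H w w) ->
  qform (invmx G) g g <= (1 - s)^-1 * qform (invmx H) g g /\
  qform (invmx H) g g <= (1 + s) * qform (invmx G) g g.
Proof.
move=> pd_H pd_G s_ge0 s_lt1 dev_le.
have ms_gt0 : 0 < 1 - s by rewrite subr_gt0.
split.
- apply: qform_invmx_le => // [|v]; first by rewrite invr_gt0.
  by rewrite ler_pdivlMl //; have := dev_le v; rewrite ler_norml; lra.
- apply: qform_invmx_le => // [|v]; first lra.
  by have := dev_le v; rewrite ler_norml; lra.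
Qed.

End PositiveDefinite.

Section RidgeRegression.
Variables (R : realType) (n d : nat) (A : 'M[R]_(n, d)) (b : 'cV[R]_d).
Variables (Lam : 'M[R]_d) (nu : R).
Hypotheses (Lam_diag : is_diag_mx Lam) (Lam_ge1 : forall i, 1 <= Lam i i).
Hypothesis nu_gt0 : 0 < nu.

Local Notation H := (Hmat A Lam nu).
Local Notation HS := (HS A Lam nu).
Local Notation CS := (CS A Lam nu).
Local Notation gradf := (gradf A b Lam nu).
Local Notation delta := (delta A b Lam nu).
Local Notation delta_tilde := (delta_tilde A b Lam nu).

Lemma posdef_Hmat : posdef H.
Proof. exact: posdef_regularized_gram. Qed.

Lemma posdef_HS m (S : 'M[R]_(m, n)) : posdef (HS S).
Proof.
have -> : HS S = (S *m A)^T *m (S *m A) + nu ^+ 2 *: Lam.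
  by rewrite /Defs.HS trmx_mul !mulmxA.
exact: posdef_regularized_gram.
Qed.

Lemma delta_gradE x :
  delta x = 2^-1 * qform (invmx H) (gradf x) (gradf x).
Proof.
have unit_H := posdef_unitmx posdef_Hmat.
rewrite -qform_invmx; last exact: posdef_Hmat.
by rewrite /Defs.gradf mulmxBr mulKmx.
Qed.

Lemma HS_dev_le m (S : 'M[R]_(m, n)) s w : 0 < s -> s < 1 ->
  opnorm2 (CS S - 1%:M) <= s ->
  `|qform (HS S) w w - qform H w w| <= s * qform H w w.
Proof.
move=> s_gt0 s_lt1; rewrite /Defs.CS /invsqrtm.
(* [invsqrtm] is a choice defaulting to 0; showing that a square root exists
   would need the spectral theorem. In the default case C_S = 0, and the
   hypothesis |0 - I| <= s < 1 forces the dimension to be 0. *)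
case: xgetP => [Q _ [[sym_Q _] QQ]|_].
  by apply: qform_dev_le_of_opnorm2 posdef_Hmat sym_Q QQ s_gt0.
rewrite mul0mx mulmx0 sub0r => /cV_eq0_of_opnorm2_opp1 w_eq0.
by rewrite (w_eq0 w) ?(ltW s_gt0) // /qform !mulmx0 !mxE subrr normr0 mulr0.
Qed.

Section Preconditioned.
Variables (m : nat) (S : 'M[R]_(m, n)) (s : R).
Hypotheses (s_gt0 : 0 < s) (s_lt1 : s < 1) (CS_le : opnorm2 (CS S - 1%:M) <= s).

Let sandwich g :=
  qform_invmx_sandwich g posdef_Hmat (posdef_HS S) (ltW s_gt0) s_lt1
    (fun w => HS_dev_le w s_gt0 s_lt1 CS_le).

Lemma delta_tilde_le_delta x : delta_tilde S x <= (1 - s)^-1 * delta x.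
Proof.
have [le_inv _] := sandwich (gradf x).
by rewrite delta_gradE /Defs.delta_tilde mulrCA ler_wpM2l ?invr_ge0.
Qed.

Lemma delta_le_delta_tilde x : delta x <= (1 + s) * delta_tilde S x.
Proof.
have [_ le_inv] := sandwich (gradf x).
by rewrite delta_gradE /Defs.delta_tilde mulrCA ler_wpM2l ?invr_ge0.
Qed.

End Preconditioned.

End RidgeRegression.

Theorem corollary2p5 (R : realType) (n d : nat) (A : 'M[R]_(n, d)) (b : 'cV[R]_d)
  (Lam : 'M[R]_d) (nu : R)
  (hnd : (d <= n)%N)
  (hLdiag : is_diag_mx Lam) (hLge : forall i : 'I_d, 1 <= Lam i i)
  (hnu : 0 < nu)
  (rho : R) (phi : R -> R) (alpha : R)
  (hrho : 0 < rho < 1)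
  (hphi : forall r : R, 0 < r < 1 -> 0 <= phi r)
  (halpha : 0 <= alpha)
  (psi : method R d)
  (hpsi : precond_first_order A b Lam nu psi)
  (hconv : linear_convergence A b Lam nu psi rho (phi rho) alpha) :
  forall (x0 : 'cV[R]_d) (m : nat) (S : 'M[R]_(m, n)),
    (1 <= m)%N ->
    opnorm2 (CS A Lam nu S - 1%:M) <= Num.sqrt rho ->
    forall t : nat,
      delta_tilde A b Lam nu S (iterate psi x0 (HS A Lam nu S) t)
      <= (1 + Num.sqrt rho) / (1 - Num.sqrt rho) * alpha * phi rho ^+ t
         * delta_tilde A b Lam nu S x0.
Proof.
move=> x0 m S m_ge1 CS_le t.
have [rho_gt0 rho_lt1] := andP hrho.
set s := Num.sqrt rho in CS_le *.
have s_gt0 : 0 < s by rewrite sqrtr_gt0.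
have s_lt1 : s < 1 by rewrite -sqrtr1 ltr_sqrt.
have K_ge0 : 0 <= alpha * phi rho ^+ t by rewrite mulr_ge0 ?exprn_ge0 ?hphi.
have CS_le_max : opnorm2 (CS A Lam nu S - 1%:M) <= Num.max s rho.
  by rewrite le_max CS_le.
have conv := hconv x0 m S m_ge1 CS_le_max t.
set xt := iterate psi x0 (HS A Lam nu S) t in conv *.
apply: le_trans (delta_tilde_le_delta b hLdiag hLge hnu s_gt0 s_lt1 CS_le xt) _.
have -> : (1 + s) / (1 - s) * alpha * phi rho ^+ t * delta_tilde A b Lam nu S x0 =
    (1 - s)^-1 * (alpha * phi rho ^+ t * ((1 + s) * delta_tilde A b Lam nu S x0)).
  by ring.
rewrite ler_wpM2l ?invr_ge0 ?subr_ge0 ?(ltW s_lt1) //.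
apply: le_trans conv _; rewrite ler_wpM2l //.
exact (delta_le_delta_tilde b hLdiag hLge hnu s_gt0 s_lt1 CS_le x0).
Qed.
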